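(* In the Setting below, for every proper stable set sequence $\mathcal I=(I_1,\dots,I_t)$, the probability that MaximalSetResample follows $\mathcal I$ is at most $p_{\mathcal I}=\prod_{s=1}^t\prod_{i\in I_s}p_i$. Consequently, for every $\ell\ge1$ the probability that the algorithm runs for at least $\ell$ iterations is at most $\sum_{\mathcal I\in\mathrm{Prop}_\ell}p_{\mathcal I}$, and for every $s\ge1$ the probability that it resamples at least $s$ events is at most $\sum_{\mathcal I\in\mathrm{Prop}:\,\sigma(\mathcal I)=s}p_{\mathcal I}$.
   Context: Setting: Let $(\Omega,\mu)$ be a probability space, $E_1,\dots,E_n\subseteq\Omega$ events with $p_i=\mu(E_i)>0$, and $G$ an undirected simple graph on $[n]$; $\Gamma(i)$ is the set of neighbours of $i$, $\Gamma^+(i)=\Gamma(i)\cup\{i\}$, $\Gamma^+(J)=\bigcup_{i\in J}\Gamma^+(i)$. A resampling oracle for $E_i$ with respect to $G$ is a randomized procedure $r_i:\Omega\to\Omega$ such that (R1) if $\omega$ is distributed according to $\mu$ conditioned on $E_i$, then $r_i(\omega)$ is distributed according to $\mu$; (R2) for every $j\notin\Gamma^+(i)$ and every $\omega\notin E_j$, $r_i(\omega)\notin E_j$ with probability 1. Assume one can sample from $\mu$, test whether $\omega\in E_i$, and that resampling oracles $r_1,\dots,r_n$ for $E_1,\dots,E_n$ with respect to $G$ are available, each call using fresh independent randomness. Algorithm MaximalSetResample: draw $\omega\sim\mu$; then repeat iterations: in each iteration set $J:=\emptyset$ and, while there is an index $i\notin\Gamma^+(J)$ with $\omega\in E_i$,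 take the smallest such $i$, set $J:=J\cup\{i\}$ and $\omega:=r_i(\omega)$; if an iteration ends with $J=\emptyset$, stop and output $\omega$. The number of events resampled is the total number of calls to resampling oracles. A stable set sequence is a finite sequence $(I_1,\dots,I_t)$ of independent sets of $G$ with $I_{s+1}\subseteq\Gamma^+(I_s)$ for $1\le s<t$; it is proper if every $I_s$ is nonempty. $\mathrm{Prop}$ is the set of proper stable set sequences, $\mathrm{Prop}_\ell$ those of length $\ell$, and $\sigma(\mathcal I)=\sum_s|I_s|$. The algorithm follows $\mathcal I=(I_1,\dots,I_t)$ if for each $s<t$, $I_s$ is exactly the set $J$ of events resampled in iteration $s$, and $I_t$ is the set of the first $m$ events resampled in iteration $t$, for some $m\ge1$. *)

From HB Require Import structures.
From mathcomp Require Import all_boot all_order all_algebra.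
From mathcomp Require Import all_classical all_reals all_analysis.
Set Implicit Arguments. Unset Strict Implicit. Unset Printing Implicit Defensive.
Import Order.TTheory GRing.Theory Num.Theory.

Section Graph.
Variable n : nat.
Variable adj : rel 'I_n.

Definition simple_graph : Prop := symmetric adj /\ irreflexive adj.

Definition closedN (J : {set 'I_n}) : {set 'I_n} :=
  [set j | (j \in J) || [exists i in J, adj i j]].

Definition independent (I : {set 'I_n}) : bool :=
  [forall i in I, forall j in I, ~~ adj i j].

Fixpoint stable_chain (I0 : {set 'I_n}) (s : seq {set 'I_n}) : bool :=
  match s with
  | [::] => true
  | I1 :: s' => (I1 \subset closedN I0) && stable_chain I1 s'
  end.

Definition stable_seq (s : seq {set 'I_n}) : bool :=
  seq.all independent s &&
  match s with [::] => true | I1 :: s' => stable_chain I1 s' end.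

Definition proper_stable_seq (s : seq {set 'I_n}) : bool :=
  stable_seq s && seq.all (fun I => I != finset.set0) s.

Definition sigma_seq (s : seq {set 'I_n}) : nat := \sum_(I <- s) #|I|.
End Graph.

(* One elementary step of MaximalSetResample:
   Res i  : the oracle r_i is called (event i is resampled);
   EndIt  : an iteration ends with J <> emptyset (a new iteration starts);
   Halt   : an iteration ends with J = emptyset, the algorithm stops. *)
Inductive step (n : nat) := Res of 'I_n | EndIt | Halt.
Arguments EndIt {n}. Arguments Halt {n}.

Section Traces.
Variable n : nat.

(* the lists of events resampled in the successive iterations, in order;
   the last list is the current (possibly unfinished) iteration *)
Fixpoint blocks (tr : seq (step n)) : seq (seq 'I_n) :=
  match tr with
  | [::] => [:: [::]]
  | Res i :: tr' => let b := blocks tr' in (i :: head [::] b) :: behead b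
  | EndIt :: tr' => [::] :: blocks tr'
  | Halt :: _ => [:: [::]]
  end.

(* the trace (prefix) witnesses that the algorithm follows (I_1,...,I_t):
   iterations 1..t-1 are finished and resampled exactly I_1..I_{t-1},
   and I_t is the set of the first m >= 1 events resampled in iteration t *)
Definition follows_trace (I : seq {set 'I_n}) (tr : seq (step n)) : Prop :=
  match I with
  | [::] => True
  | _ :: _ =>
    let bs := blocks tr in let t := size I in
    t <= size bs /\
    (forall s, s < t.-1 -> [set x in nth [::] bs s] = nth finset.set0 I s) /\
    exists m, 0 < m /\ m <= size (nth [::] bs t.-1) /\
              [set x in take m (nth [::] bs t.-1)] = nth finset.set0 I t.-1
  end.

Definition atleast_iter_trace (l : nat) (tr : seq (step n)) : Prop :=
  l <= count (fun b => b != [::]) (blocks tr).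

Definition atleast_res_trace (s : nat) (tr : seq (step n)) : Prop :=
  s <= count (fun st => if st is Res _ then true else false) tr.
End Traces.

Section Algorithm.
Local Open Scope classical_set_scope.
Local Open Scope ring_scope.
Local Open Scope ereal_scope.
Context {d : measure_display} {T : measurableType d} {R : realType}.
Variable n : nat.
Variable adj : rel 'I_n.
Variable E : 'I_n -> set T.
Variable mu : probability T R.
Variable r : 'I_n -> R.-pker T ~> T.

Definition oracle_R1 (i : 'I_n) : Prop :=
  forall A, measurable A ->
    ((fine (mu (E i)))^-1)%R%:E * \int[mu]_(x in E i) r i x A = mu A.

Definition oracle_R2 (i : 'I_n) : Prop :=
  forall j, j \notin closedN adj (finset.set1 i) ->
    forall x, ~ E j x -> r i x (E j) = 0.

Definition next_event (x : T) (J : {set 'I_n}) : option 'I_n :=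
  ohead [seq i <- enum 'I_n | (i \notin closedN adj J) && `[< E i x >]].

(* probability, starting from the current point x, current resampled set J
   and trace so far h, that within at most k further elementary steps the
   trace of the run has a prefix satisfying Q *)
Fixpoint run_val (Q : seq (step n) -> Prop) (k : nat) (x : T)
    (J : {set 'I_n}) (h : seq (step n)) : \bar R :=
  if `[< Q h >] then 1 else
  match k with
  | 0 => 0
  | k'.+1 =>
    match next_event x J with
    | Some i => \int[r i x]_y run_val Q k' y (i |: J) (rcons h (Res i))
    | None => if J == finset.set0 then (if `[< Q (rcons h Halt) >] then 1 else 0)
              else run_val Q k' x finset.set0 (rcons h EndIt)
    end
  end.

(* probability that the run (started from omega ~ mu) has a finite prefix
   trace satisfying Q: sup over the number k of elementary steps *)
Definition alg_prob (Q : seq (step n) -> Prop) : \bar R :=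
  ereal_sup [set \int[mu]_x run_val Q k x finset.set0 [::] | k in [set: nat]].

Definition pI (I : seq {set 'I_n}) : R :=
  (\prod_(S <- I) \prod_(i in S) fine (mu (E i)))%R.
End Algorithm.

From Pilot Require Import Defs.
From HB Require Import structures.
From mathcomp Require Import all_boot all_order all_algebra.
From mathcomp Require Import all_classical all_reals all_analysis.
From mathcomp Require Import measurable_realfun.
Import Order.TTheory GRing.Theory Num.Theory.

(* Since the algorithm always
   resamples the smallest eligible event, each iteration resamples its events in
   increasing order, so a stable set sequence [I] is encoded by a single word
   [stable_word I], and the run follows [I] iff its trace begins with that word.
   Likewise, a run with at least [l] iterations (or [s] resamplings) has a trace
   beginning with the word of a proper stable set sequence of length [l] (or of
   weight [s]): by (R2), almost surely the events that would break the structure of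
   a stable set sequence never occur when the algorithm looks for the next event.
   The probability that the trace begins with a word is bounded by an integral in
   which every resampling of [E_i] is an integral over [E_i] of the oracle [r_i];
   by (R1) this integral contributes exactly the factor [p_i], whence [p_I].  The
   union bound over the relevant words gives the last two claims. *)

(* The topology library also exports a [closedN]. *)
Local Notation closedN := Defs.closedN.

Set Implicit Arguments.
Unset Strict Implicit.
Unset Printing Implicit Defensive.

Section StepEqType.
Variable n : nat.

Definition step_code (s : step n) : 'I_n + bool :=
  match s with Res i => inl i | EndIt => inr true | Halt => inr false end.

Definition step_decode (c : 'I_n + bool) : step n :=
  match c with inl i => Res i | inr true => EndIt | inr false => Halt end.

Lemma step_codeK : cancel step_code step_decode. Proof. by case. Qed.

End StepEqType.

HB.instance Definition _ n := Equality.copy (step n) (can_type (@step_codeK n)).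

Lemma sumn_size_split (A : Type) (bs : seq (seq A)) s :
  0 < s <= sumn (map size bs) ->
  exists k m, [/\ k < size bs, 0 < m <= size (nth [::] bs k) &
                  sumn (map size (take k bs)) + m = s].
Proof.
elim: bs s => [|b bs IH] s /=; first by case: s.
case/andP=> s_gt0 s_le; have [s_leb|b_lts] := leqP s (size b).
  by exists 0, s; rewrite s_gt0 s_leb.
have [|k [m [lt_k m_ok sum_km]]] := IH (s - size b).
  by rewrite subn_gt0 b_lts leq_subLR.
by exists k.+1, m; rewrite /= -addnA sum_km subnKC // ltnW.
Qed.

Lemma size_le_sumn_size (A : Type) (bs : seq (seq A)) :
  all (fun b => ~~ nilp b) bs -> size bs <= sumn (map size bs).
Proof.
elim: bs => [|[|x b] bs IH] //= /IH le_bs.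
by rewrite addSn ltnS (leq_trans le_bs) ?leq_addl.
Qed.

Section BlocksWord.
Variable n : nat.
Implicit Types (h : seq (step n)) (bs : seq (seq 'I_n)).

Fixpoint blocks_word bs : seq (step n) :=
  match bs with
  | [::] => [::]
  | b :: bs' => map (@Res n) b ++ (if bs' is [::] then [::] else EndIt :: blocks_word bs')
  end.

(* The blocks [b_0, ..., b_(k-1), take m b_k]: the trace up to the [m]-th
   resampling of iteration [k]. *)
Definition trunc_blocks bs k m := rcons (take k bs) (take m (nth [::] bs k)).

Lemma blocks_cons h : blocks h = head [::] (blocks h) :: behead (blocks h).
Proof. by case: h => [|[i| |] h]. Qed.

Lemma prefix_trunc_blocks h k m : k < size (blocks h) ->
  prefix (blocks_word (trunc_blocks (blocks h) k m)) h.
Proof.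
rewrite /trunc_blocks.
elim: h k m => [|[i| |] h IH] k m /=; [by case: k | | | by case: k].
- have := blocks_cons h; case: (blocks h) IH => [|b bs] IH // _.
  case: k => [|k] /= lt_k; last by rewrite eqxx; have /= := IH k.+1 m lt_k.
  by case: m => [|m] //=; rewrite eqxx; have /= := IH 0 m isT.
- case: k => [|k] //= lt_k.
  by case: (take k _) (IH k m lt_k) => [|b bs] /=; rewrite ?eqxx.
Qed.

End BlocksWord.

Section OrdinalLt.
Context {n : nat}.

Definition ord_lt : rel 'I_n := relpre val ltn.

Lemma ord_lt_trans : transitive ord_lt. Proof. by move=> ? ? ?; exact: ltn_trans. Qed.

Lemma ord_lt_irr : irreflexive ord_lt. Proof. by move=> ?; exact: ltnn. Qed.

Lemma sorted_enum_ord : sorted ord_lt (enum 'I_n).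
Proof. by have := iota_ltn_sorted 0 n; rewrite -val_enum_ord sorted_map. Qed.

Lemma sorted_enum_set (J : {set 'I_n}) : sorted ord_lt (enum J).
Proof.
have -> : enum J = [seq x <- enum 'I_n | x \in J] by rewrite enumT /enum_mem.
by apply: sorted_filter; [exact: ord_lt_trans | exact: sorted_enum_ord].
Qed.

Lemma enum_set_sorted (b : seq 'I_n) : sorted ord_lt b -> enum [set x in b] = b.
Proof.
move=> b_sorted; apply: (irr_sorted_eq ord_lt_trans ord_lt_irr) => //.
  exact: sorted_enum_set.
by move=> x; rewrite mem_enum inE.
Qed.

End OrdinalLt.

Section ValidTraces.
Variables (n : nat) (adj : rel 'I_n).
Implicit Types (P J : {set 'I_n}) (h : seq (step n)) (b cur : seq 'I_n)
  (bs : seq (seq 'I_n)).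

Lemma notin_closedN J i :
  (i \notin closedN adj J) = (i \notin J) && [forall j in J, ~~ adj j i].
Proof.
rewrite inE negb_or negb_exists; congr (_ && _).
by apply: eq_forallb => j; rewrite negb_and implybE.
Qed.

Lemma closedNS J J' : J \subset J' -> closedN adj J \subset closedN adj J'.
Proof.
move/fintype.subsetP=> sJ; apply/fintype.subsetP => j; rewrite !inE.
case/orP=> [/sJ -> //| /existsP [i /andP [iJ adj_ij]]].
by apply/orP; right; apply/existsP; exists i; rewrite sJ.
Qed.

Lemma closedNT : closedN adj [set: 'I_n] = [set: 'I_n].
Proof. by apply/setP => j; rewrite !inE. Qed.

Lemma independentS J J' : J \subset J' -> independent adj J' -> independent adj J.
Proof.
move/fintype.subsetP=> sJ /forall_inP ind; apply/forall_inP => i /sJ /ind /forall_inP ind_i.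
by apply/forall_inP => j /sJ /ind_i.
Qed.

(* [h] is a possible continuation of the run when the current iteration has
   resampled [cur] so far and the previous one resampled [P] ([P = setT] in the
   first iteration). *)
Fixpoint valid_trace P cur h : bool :=
  match h with
  | [::] => true
  | Res i :: h' => [&& i \notin closedN adj [set x in cur], all (ord_lt^~ i) cur,
                     i \in closedN adj P & valid_trace P (rcons cur i) h']
  | EndIt :: h' => ~~ nilp cur && valid_trace [set x in cur] [::] h'
  | Halt :: h' => nilp h'
  end.

Definition valid_block P b : bool :=
  [&& sorted ord_lt b, independent adj [set x in b] & [set x in b] \subset closedN adj P].

Fixpoint valid_blocks P bs : bool :=
  if bs is b :: bs' then
    valid_block P b && (if bs' is [::] then true
                        else ~~ nilp b && valid_blocks [set x in b] bs')
  else true.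

Hypothesis adj_simple : simple_graph adj.

Lemma valid_block_rcons P cur i :
  valid_block P cur -> i \notin closedN adj [set x in cur] ->
  all (ord_lt^~ i) cur -> i \in closedN adj P -> valid_block P (rcons cur i).
Proof.
case/and3P=> cur_sorted cur_ind cur_sub; rewrite notin_closedN inE.
case/andP=> i_cur /forall_inP i_indep lt_cur_i iP; have [adj_sym adj_irr] := adj_simple.
have set_rcons : [set x in rcons cur i] = i |: [set x in cur].
  by apply/setP => x; rewrite !inE mem_rcons in_cons.
apply/and3P; split.
- case: cur lt_cur_i {cur_ind cur_sub i_cur i_indep set_rcons} cur_sorted => // c cur lt_cur_i.
  by rewrite /= rcons_path => ->; rewrite (allP lt_cur_i) ?mem_last.
- rewrite set_rcons; apply/forall_inP => x; rewrite !inE => x_new.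
  apply/forall_inP => y; rewrite !inE => y_new.
  case/orP: x_new => [/eqP -> | x_cur]; case/orP: y_new => [/eqP -> | y_cur].
  + by rewrite adj_irr.
  + by rewrite adj_sym i_indep ?inE.
  + by rewrite i_indep ?inE.
  + have /forall_inP cur_ind_x : [forall j in [set x in cur], ~~ adj x j].
      by apply: (forall_inP cur_ind); rewrite inE.
    by rewrite cur_ind_x ?inE.
- by rewrite set_rcons finset.subUset finset.sub1set iP.
Qed.

Lemma valid_trace_blocks P cur h : valid_block P cur -> valid_trace P cur h ->
  valid_blocks P ((cur ++ head [::] (blocks h)) :: behead (blocks h)).
Proof.
elim: h P cur => [|[i| |] h IH] P cur cur_ok /=; rewrite ?cats0 ?cur_ok //.
- case/and4P=> i_new lt_cur_i iP /(IH _ _ (valid_block_rcons cur_ok i_new lt_cur_i iP)).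
  by rewrite cat_rcons.
- case/andP=> cur_ne /(IH [set x in cur] [::]); rewrite cat0s -blocks_cons.
  have -> : valid_block [set x in cur] [::].
    by rewrite /valid_block /= finset.sub0set andbT; apply/forall_inP => x; rewrite inE.
  by move=> /(_ isT) ->; case: (blocks h); rewrite //= cur_ne.
Qed.

Lemma valid_blocks_all P bs : valid_blocks P bs ->
  all (fun b => sorted ord_lt b && independent adj [set x in b]) bs.
Proof.
elim: bs P => [|b bs IH] P //= /andP [/and3P [-> -> _]].
by case: bs IH => // b' bs IH /andP [_ /IH].
Qed.

Lemma valid_blocks_nth_nonempty P bs j : valid_blocks P bs ->
  j.+1 < size bs -> ~~ nilp (nth [::] bs j).
Proof.
elim: bs P j => [|b [|b' bs] IH] P [|j] //= /and3P [_ b_ne ok] //.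
exact: IH ok.
Qed.

Lemma valid_block_take P b m : valid_block P b -> valid_block P (take m b).
Proof.
have sub_take : [set x in take m b] \subset [set x in b].
  by apply/fintype.subsetP => x; rewrite !inE; exact: mem_take.
case/and3P=> b_sorted b_ind b_sub; apply/and3P; split.
- exact: take_sorted.
- exact: independentS b_ind.
- exact: fintype.subset_trans sub_take b_sub.
Qed.

Lemma valid_blocks_trunc P bs k m : valid_blocks P bs -> k < size bs ->
  valid_blocks P (trunc_blocks bs k m).
Proof.
rewrite /trunc_blocks.
elim: bs P k => [|b bs IH] P [|k] //=; first by case/andP=> /valid_block_take ->.
case: bs IH => // b' bs IH /and3P [-> b_ne ok] lt_k.
by case: k lt_k (IH _ k ok) => [|k] lt_k /= ->; rewrite ?b_ne.
Qed.

Lemma valid_blocks_chain P b bs : valid_blocks P (b :: bs) ->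
  stable_chain adj [set x in b] [seq [set x in b'] | b' <- bs].
Proof.
elim: bs P b => [|b' bs IH] P b // /andP [_ /andP [_ ok]].
by rewrite [stable_chain _ _ _]/= (IH _ _ ok) andbT; case/andP: ok => /and3P [].
Qed.

Lemma valid_blocks_proper P bs : valid_blocks P bs -> all (fun b => ~~ nilp b) bs ->
  proper_stable_seq adj [seq [set x in b] | b <- bs].
Proof.
move=> ok bs_ne; rewrite /proper_stable_seq /stable_seq -andbA; apply/and3P; split.
- apply/allP => _ /mapP [b b_bs ->].
  by have /andP [] := allP (valid_blocks_all ok) b b_bs.
- by case: bs ok {bs_ne} => //= b bs /valid_blocks_chain.
- apply/allP => _ /mapP [[|x b] /(allP bs_ne) // _ ->].
  by apply/set0Pn; exists x; rewrite inE mem_head.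
Qed.

Lemma valid_trace_blocks_start h :
  valid_trace [set: 'I_n] [::] h -> valid_blocks [set: 'I_n] (blocks h).
Proof.
have nil_ok : valid_block [set: 'I_n] [::].
  by rewrite /valid_block /= closedNT finset.subsetT andbT; apply/forall_inP => x; rewrite inE.
by move/(valid_trace_blocks nil_ok); rewrite cat0s -blocks_cons.
Qed.

Lemma count_res_blocks P cur h : valid_trace P cur h ->
  count (fun st => if st is Res _ then true else false) h = sumn (map size (blocks h)).
Proof.
elim: h P cur => [|[i| |] h IH] P cur //=.
- by case/and4P=> _ _ _ /IH ->; case: (blocks h).
- by case/andP=> _ /IH ->.
- by case: h {IH}.
Qed.

Definition stable_word (I : seq {set 'I_n}) : seq (step n) :=
  blocks_word [seq enum J | J <- I].

Definition trace_stable_seq h k m : seq {set 'I_n} :=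
  [seq [set x in b] | b <- trunc_blocks (blocks h) k m].

Section ValidTrace.
Variable h : seq (step n).
Hypothesis h_valid : valid_trace [set: 'I_n] [::] h.

Let blocks_ok := valid_trace_blocks_start h_valid.

Lemma size_trace_stable_seq k m : k < size (blocks h) ->
  size (trace_stable_seq h k m) = k.+1.
Proof. by move=> lt_k; rewrite size_map size_rcons size_takel // ltnW. Qed.

Lemma prefix_trace_stable_seq k m : k < size (blocks h) ->
  prefix (stable_word (trace_stable_seq h k m)) h.
Proof.
move=> lt_k; have /valid_blocks_all trunc_ok := valid_blocks_trunc m blocks_ok lt_k.
have enum_trunc : [seq enum J | J <- trace_stable_seq h k m] = trunc_blocks (blocks h) k m.
  rewrite -map_comp -[RHS]map_id; apply/eq_in_map => b /(allP trunc_ok) /andP [b_sorted _].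
  exact: enum_set_sorted.
by rewrite /stable_word enum_trunc; exact: prefix_trunc_blocks.
Qed.

Lemma take_blocks_nonempty k : k < size (blocks h) ->
  all (fun b => ~~ nilp b) (take k (blocks h)).
Proof.
move=> lt_k; apply/(all_nthP [::]) => j; rewrite size_takel ?(ltnW lt_k) // => lt_jk.
by rewrite nth_take //; apply: valid_blocks_nth_nonempty blocks_ok _; exact: leq_ltn_trans lt_k.
Qed.

Lemma trace_stable_seq_proper k m : k < size (blocks h) ->
  0 < m <= size (nth [::] (blocks h) k) -> proper_stable_seq adj (trace_stable_seq h k m).
Proof.
move=> lt_k /andP [m_gt0 m_le]; apply: valid_blocks_proper (valid_blocks_trunc m blocks_ok lt_k) _.
by rewrite all_rcons take_blocks_nonempty // andbT /nilp size_takel // -lt0n.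
Qed.

Lemma sigma_trace_stable_seq k m : k < size (blocks h) -> m <= size (nth [::] (blocks h) k) ->
  sigma_seq (trace_stable_seq h k m) = sumn (map size (take k (blocks h))) + m.
Proof.
move=> lt_k m_le; have /valid_blocks_all trunc_ok := valid_blocks_trunc m blocks_ok lt_k.
rewrite /sigma_seq big_map (eq_big_seq size); last first.
  move=> b /(allP trunc_ok) /andP [b_sorted _]; rewrite cardsE; apply/card_uniqP.
  exact: (sorted_uniq ord_lt_trans ord_lt_irr).
have sum_size bs : \sum_(b <- bs) size b = sumn (map size bs) by rewrite sumnE big_map.
by rewrite sum_size /trunc_blocks map_rcons sumn_rcons size_takel.
Qed.

Lemma follows_trace_prefix I : follows_trace I h -> prefix (stable_word I) h.
Proof.
case: I => [|I1 I] /=; first by rewrite prefix0s.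
case=> lt_I [eq_blocks [m [m_gt0 [m_le eq_last]]]].
suff -> : I1 :: I = trace_stable_seq h (size I) m by apply: prefix_trace_stable_seq.
apply: (@eq_from_nth _ finset.set0); first by rewrite size_trace_stable_seq.
move=> j; rewrite /= ltnS => le_j.
have le_I : size I <= size (blocks h) by exact: ltnW.
rewrite (nth_map [::]) ?size_rcons ?size_takel // nth_rcons size_takel //.
case: ltngtP le_j => // [lt_j | ->] _; last by rewrite eq_last.
by rewrite nth_take // -eq_blocks.
Qed.

Lemma iterations_prefix l : 0 < l -> atleast_iter_trace l h ->
  exists2 I : l.-tuple {set 'I_n}, proper_stable_seq adj I & prefix (stable_word I) h.
Proof.
rewrite /atleast_iter_trace => l_gt0 le_l; set bs := blocks h in le_l.
have le_size : l <= size bs := leq_trans le_l (count_size _ _).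
have lt_l : l.-1 < size bs by rewrite prednK.
have : ~~ nilp (nth [::] bs l.-1).
  have [lt_lsize | ] := ltnP l.-1.+1 (size bs); first exact: valid_blocks_nth_nonempty blocks_ok _.
  rewrite prednK // => ge_size; have eq_size : l = size bs by apply/eqP; rewrite eqn_leq le_size.
  have : all (fun b => b != [::]) bs by rewrite all_count eqn_leq count_size -eq_size.
  by move/(all_nthP [::])/(_ l.-1 lt_l); rewrite nilpE.
rewrite -lt0n => nth_ne.
have size_I : size (trace_stable_seq h l.-1 (size (nth [::] bs l.-1))) == l.
  by rewrite size_trace_stable_seq // prednK.
exists (Tuple size_I) => /=; last exact: prefix_trace_stable_seq.
by apply: trace_stable_seq_proper => //; rewrite nth_ne /=.
Qed.

Lemma resamplings_prefix s : 0 < s -> atleast_res_trace s h ->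
  exists I, [/\ proper_stable_seq adj I, size I <= s, sigma_seq I = s &
                prefix (stable_word I) h].
Proof.
rewrite /atleast_res_trace (count_res_blocks h_valid) => s_gt0 le_s.
have := @sumn_size_split _ (blocks h) s; rewrite s_gt0 le_s.
case=> // k [m [lt_k /andP [m_gt0 m_le] sum_km]].
exists (trace_stable_seq h k m); split.
- by apply: trace_stable_seq_proper; rewrite ?m_gt0.
- rewrite size_trace_stable_seq // -sum_km -addn1 leq_add //.
  by rewrite -[k in k <= _](size_takel (ltnW lt_k)) size_le_sumn_size ?take_blocks_nonempty.
- by rewrite sigma_trace_stable_seq.
- exact: prefix_trace_stable_seq.
Qed.

End ValidTrace.

End ValidTraces.

Local Open Scope classical_set_scope.
Local Open Scope ring_scope.
Local Open Scope ereal_scope.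

Section ResamplingIntegral.
Context d (T : measurableType d) (R : realType).
Variables (mu : probability T R) (k : R.-pker T ~> T) (E : set T).
Hypothesis mE : measurable E.

(* Composed with the constant kernel [mu], this gives [A |-> \int_E k x A dmu]. *)
Definition restricted_kernel : T * T -> {measure set T -> \bar R} :=
  fun xy => if `[< E xy.2 >] then k xy.2 else mzero.

Let restricted_kernelE U xy : restricted_kernel xy U = (\1_E xy.2)%:E * k xy.2 U.
Proof.
rewrite /restricted_kernel indicE; case: asboolP => Ey; first by rewrite mem_set // mul1e.
by rewrite memNset // mul0e.
Qed.

Let measurable_restricted_kernel U :
  measurable U -> measurable_fun [set: (T * T)%type] (restricted_kernel ^~ U).
Proof.
move=> mU; rewrite (_ : restricted_kernel ^~ U = (fun y => (\1_E y)%:E * k y U) \o snd).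
  apply: measurableT_comp => //; apply: emeasurable_funM; last exact: measurable_kernel.
  by apply/measurable_EFinP; exact: measurable_indic.
by apply/funext => xy; rewrite restricted_kernelE.
Qed.

HB.instance Definition _ := isKernel.Build _ _ _ T R restricted_kernel measurable_restricted_kernel.

Let restricted_kernel_uub : measure_fam_uub restricted_kernel.
Proof.
exists 2%R => xy; rewrite restricted_kernelE (@le_lt_trans _ _ 1) ?lte_fin ?ltr1n //.
by rewrite indicE; case: (_ \in _); rewrite ?mul0e // mul1e prob_kernel.
Qed.

HB.instance Definition _ := Kernel_isFinite.Build _ _ _ T R restricted_kernel restricted_kernel_uub.

Hypothesis resampling : forall A, measurable A ->
  ((fine (mu E))^-1)%R%:E * \int[mu]_(x in E) k x A = mu A.
Hypothesis E_gt0 : 0 < mu E.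

Let integral_restricted_kernel x0 (G : {measure set T -> \bar R} -> \bar R) : G mzero = 0 ->
  \int[mu]_y G (restricted_kernel (x0, y)) = \int[mu]_(y in E) G (k y).
Proof.
move=> G0; rewrite [RHS]integral_mkcond; apply: eq_integral => y _.
by rewrite /restricted_kernel /patch /=; case: asboolP => Ey; [rewrite mem_set | rewrite memNset].
Qed.

Lemma integral_resampling (f : T -> \bar R) : (forall z, 0 <= f z) ->
  measurable_fun setT f ->
  \int[mu]_(x in E) \int[k x]_z f z = (fine (mu E))%:E * \int[mu]_x f x.
Proof.
move=> f_ge0 mf.
have muE_gt0 : (0 < fine (mu E))%R.
  by rewrite fine_gt0 // E_gt0 (le_lt_trans (probability_le1 mu mE)) ?ltey.
have [x0 _] : exists x : T, True.
  apply: contrapT => T0; suff : mu [set: T] = 0.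
    by rewrite probability_setT => /eqP; rewrite onee_eq0.
  by rewrite -(measure0 mu); congr (mu _); apply/seteqP; split => // x _; apply: T0; exists x.
pose mu_k := @kprobability _ _ T T R (cst mu) (measurable_cst _).
rewrite -(@integral_restricted_kernel x0 (fun m => \int[m]_z f z)) ?integral_measure_zero //.
rewrite -(integral_kcomp mu_k restricted_kernel x0 f_ge0 mf).
pose c := @NngNum _ (fine (mu E)) (ltW muE_gt0).
rewrite (eq_measure_integral (mscale c mu)) ?ge0_integral_mscale // => A mA _.
rewrite /= /kcomp /= (@integral_restricted_kernel x0 (fun m => m A)) //.
by rewrite /mscale /= -(resampling mA) muleA -EFinM divff ?mul1e // gt_eqF.
Qed.

End ResamplingIntegral.

Lemma lee_sum_seq_nneg (R : realDomainType) (W : eqType) (F : W -> \bar R) (ws : seq W) w :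
  (forall u, 0 <= F u) -> w \in ws -> F w <= \sum_(u <- ws) F u.
Proof.
move=> F_ge0; elim: ws => [|u ws IH] //; rewrite in_cons big_cons.
case/orP=> [/eqP -> | /IH]; first by rewrite leeDl // sume_ge0.
by move/le_trans; apply; rewrite leeDr.
Qed.

Section RunVal.
Context d (T : measurableType d) (R : realType).
Variables (mu : probability T R) (n : nat) (adj : rel 'I_n) (E : 'I_n -> set T)
  (r : 'I_n -> R.-pker T ~> T).
Hypothesis mE : forall i, measurable (E i).

Local Notation run_val := (run_val adj E r).
Local Notation next_event := (next_event adj E).
Implicit Types (Q : seq (step n) -> Prop) (h w : seq (step n)) (J P : {set 'I_n})
  (cur : seq 'I_n).

Lemma run_val_sat Q k x J h : Q h -> run_val Q k x J h = 1.
Proof. by move=> Qh; case: k => [|k] /=; rewrite asboolT. Qed.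

Lemma run_val_unfold Q k x J h : ~ Q h ->
  run_val Q k.+1 x J h =
  match next_event x J with
  | Some i => \int[r i x]_y run_val Q k y (i |: J) (rcons h (Res i))
  | None => if J == finset.set0 then (if `[< Q (rcons h Halt) >] then 1 else 0)
            else run_val Q k x finset.set0 (rcons h EndIt)
  end.
Proof. by move=> nQh /=; rewrite asboolF. Qed.

Lemma run_val_cat Q k x J h1 h2 :
  run_val Q k x J (h1 ++ h2) = run_val (fun h => Q (h1 ++ h)) k x J h2.
Proof.
elim: k x J h2 => [|k IH] x J h2 //=; case: asboolP => // _.
case: next_event => [i|]; first by apply: eq_integral => y _; rewrite rcons_cat IH.
by case: (J == _); rewrite rcons_cat ?IH.
Qed.

Lemma run_val_pred0 Q k x J h : (forall h', ~ Q h') -> run_val Q k x J h = 0.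
Proof.
move=> nQ; elim: k x J h => [|k IH] x J h; rewrite /= asboolF //.
case: next_event => [i|]; first by apply: integral0_eq => y _; exact: IH.
by case: (J == _); rewrite ?asboolF.
Qed.

Lemma run_val_ge0 Q k x J h : 0 <= run_val Q k x J h.
Proof.
elim: k x J h => [|k IH] x J h /=; case: asboolP => // _.
case: next_event => [i|]; first by apply: integral_ge0 => y _; exact: IH.
by case: (J == _); [case: asboolP | exact: IH].
Qed.

Definition occurring (x : T) : {ffun 'I_n -> bool} := [ffun j => `[< E j x >]].

Definition next_of J (o : {ffun 'I_n -> bool}) : option 'I_n :=
  ohead [seq i <- enum 'I_n | (i \notin closedN adj J) && o i].

Lemma next_event_occurring x J : next_event x J = next_of J (occurring x).
Proof. by congr ohead; apply: eq_filter => i; rewrite ffunE. Qed.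

Lemma measurable_occurring o : measurable [set x | occurring x = o].
Proof.
rewrite (_ : [set x | _] = \bigcap_(j in [set: 'I_n]) (if o j then E j else ~` E j)).
  apply: fin_bigcap_measurable; first exact: finite_finset.
  by move=> j _; case: (o j) => //; apply: measurableC.
apply/seteqP; split => x /=; first by move=> <- j _; rewrite ffunE; case: asboolP.
move=> Ex; apply/ffunP => j; rewrite ffunE; have := Ex j I.
by case: (o j); case: asboolP.
Qed.

Lemma measurable_next_event_cases (F : option 'I_n -> T -> \bar R) J :
  (forall o, measurable_fun setT (F o)) ->
  measurable_fun setT (fun x => F (next_event x J) x).
Proof.
move=> mF _ B mB; rewrite setTI.
rewrite (_ : _ @^-1` B = \bigcup_(o in [set: {ffun 'I_n -> bool}])
    ([set x | occurring x = o] `&` (F (next_of J o) @^-1` B))).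
  apply: fin_bigcup_measurable; first exact: finite_finset.
  move=> o _; apply: measurableI; first exact: measurable_occurring.
  by have := mF (next_of J o) measurableT B mB; rewrite setTI.
apply/seteqP; split => x /=; first by exists (occurring x); rewrite -?next_event_occurring.
by case=> o _ [/= <-]; rewrite -next_event_occurring.
Qed.

Lemma measurable_run_val Q k J h : measurable_fun setT (fun x => run_val Q k x J h).
Proof.
elim: k J h => [|k IH] J h /=; case: asboolP => _; try exact: measurable_cst.
apply: (measurable_next_event_cases (F := fun o x => match o with
  | Some i => \int[r i x]_y run_val Q k y (i |: J) (rcons h (Res i))
  | None => if J == finset.set0 then (if `[< Q (rcons h Halt) >] then 1 else 0)
            else run_val Q k x finset.set0 (rcons h EndIt) end)) => -[i|].
  apply: (measurable_fun_integral_kernel (l := r i)); first exact: measurable_kernel.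
    by move=> y; exact: run_val_ge0.
  exact: IH.
by case: (J == _); [case: asboolP => _; exact: measurable_cst | exact: IH].
Qed.

Lemma run_val_le1 Q k x J h : run_val Q k x J h <= 1.
Proof.
elim: k x J h => [|k IH] x J h /=; case: asboolP => // _.
case: next_event => [i|]; last by case: (J == _); [case: asboolP | exact: IH].
apply: (@le_trans _ _ (\int[r i x]_y (cst 1 y))); last by rewrite integral_cst // mul1e prob_kernel.
apply: ge0_le_integral => //; first by move=> *; exact: run_val_ge0.
exact: measurable_run_val.
Qed.

Lemma next_event_Some x J i : next_event x J = Some i ->
  [/\ i \notin closedN adj J, E i x &
      forall j : 'I_n, (j < i)%N -> j \notin closedN adj J -> ~ E j x].
Proof.
rewrite /next_event; set p := fun j => _ && _.
have : sorted ord_lt [seq j <- enum 'I_n | p j].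
  by apply: sorted_filter; [exact: ord_lt_trans | exact: sorted_enum_ord].
case s_def: [seq j <- enum 'I_n | p j] => [|a s] //= s_sorted [<-].
have : a \in [seq j <- enum 'I_n | p j] by rewrite s_def mem_head.
rewrite mem_filter => /andP [/andP [a_new /asboolP Ea] _]; split => // j lt_ja j_new Ej.
have : j \in [seq j <- enum 'I_n | p j].
  by rewrite mem_filter /p j_new mem_enum andbT; apply/asboolP.
rewrite s_def in_cons => /orP [/eqP eq_ja | j_s]; first by rewrite eq_ja ltnn in lt_ja.
have /allP /(_ j j_s) := order_path_min ord_lt_trans s_sorted.
by rewrite /ord_lt /= ltnNge ltnW.
Qed.

Lemma next_event_None x J : next_event x J = None ->
  forall j, j \notin closedN adj J -> ~ E j x.
Proof.
rewrite /next_event => + j j_new Ej.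
have : j \in [seq j <- enum 'I_n | (j \notin closedN adj J) && `[< E j x >]].
  by rewrite mem_filter j_new mem_enum andbT; apply/asboolP.
by case: [seq _ <- _ | _].
Qed.

(* No event whose occurrence would make the next step of the trace invalid
   occurs at [x]. *)
Definition quiet x P cur : Prop :=
  forall j, j \notin closedN adj [set z in cur] ->
    has (ord_lt j) cur || (j \notin closedN adj P) -> ~ E j x.

Hypothesis R2 : forall i, oracle_R2 adj E r i.

Lemma quiet_resample x P cur i : quiet x P cur -> next_event x [set z in cur] = Some i ->
  \forall y \ae r i x, quiet y P (rcons cur i).
Proof.
move=> x_quiet /next_event_Some [i_new Ei i_min].
have cur_sub : [set z in cur] \subset [set z in rcons cur i].
  by apply/fintype.subsetP => z; rewrite !inE mem_rcons in_cons orbC => ->.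
have i_sub : [set i]%SET \subset [set z in rcons cur i].
  by apply/fintype.subsetP => z; rewrite inE => /eqP ->; rewrite inE mem_rcons mem_head.
rewrite /quiet; apply: filter_forall => j.
have [/andP [j_new j_bad] | j_good] := boolP ((j \notin closedN adj [set z in rcons cur i]) &&
    (has (ord_lt j) (rcons cur i) || (j \notin closedN adj P))); last first.
  by apply: nearW => y j_new j_bad; move: j_good; rewrite j_new j_bad.
have j_new_cur : j \notin closedN adj [set z in cur].
  by apply: contra j_new; apply/fintype.subsetP; exact: closedNS.
have j_far_i : j \notin closedN adj [set i]%SET.
  by apply: contra j_new; apply/fintype.subsetP; exact: closedNS.
have nEjx : ~ E j x.
  move: j_bad; rewrite has_rcons -orbA => /orP [lt_ji | j_bad]; first exact: i_min lt_ji j_new_cur.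
  exact: x_quiet.
exists (E j); split => //; first by rewrite (R2 j_far_i nEjx).
by move=> y /= y_bad; apply: contrapT => nEjy; apply: y_bad.
Qed.

Lemma quiet_next_event x P cur i : quiet x P cur -> next_event x [set z in cur] = Some i ->
  [/\ i \notin closedN adj [set z in cur], all (ord_lt^~ i) cur & i \in closedN adj P].
Proof.
move=> x_quiet /next_event_Some [i_new Ei _]; split => //.
  apply/allP => j j_cur; rewrite /ord_lt /=.
  case: (ltngtP j i) => // [lt_ij | /val_inj eq_ji].
    by case: (x_quiet i i_new) => //; apply/orP; left; apply/hasP; exists j.
  by move: i_new; rewrite -eq_ji !inE j_cur.
by apply: contraT => iP; case: (x_quiet i i_new); rewrite ?iP ?orbT.
Qed.

Lemma le_if_asbool (A B : Prop) : (A -> B) ->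
  (if `[< A >] then 1 else 0 : \bar R) <= (if `[< B >] then 1 else 0).
Proof. by move=> AB; case: (asboolP A) => [/AB/asboolT -> | _] //; case: ifP. Qed.

Lemma run_val_le_valid Q k x P cur : quiet x P cur ->
  run_val Q k x [set z in cur] [::] <=
  run_val (fun h => Q h /\ valid_trace adj P cur h) k x [set z in cur] [::].
Proof.
elim: k Q x P cur => [|k IH] Q x P cur x_quiet; first by apply: le_if_asbool.
have [Q0 | nQ0] := pselect (Q [::]); first by rewrite !run_val_sat.
rewrite !run_val_unfold //; last by case.
case nx: next_event => [i|].
- have [i_new lt_cur_i iP] := quiet_next_event x_quiet nx.
  have set_rcons : i |: [set z in cur] = [set z in rcons cur i].
    by apply/setP => z; rewrite !inE mem_rcons in_cons.
  rewrite set_rcons; apply: ae_ge0_le_integral => //.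
  + by move=> y _; exact: run_val_ge0.
  + exact: measurable_run_val.
  + by move=> y _; exact: run_val_ge0.
  + exact: measurable_run_val.
  apply: filterS (quiet_resample x_quiet nx) => y y_quiet _.
  rewrite -[rcons [::] _]/([:: Res i] ++ [::]) !run_val_cat.
  rewrite (_ : (fun h => _ /\ _) =
      (fun h => Q ([:: Res i] ++ h) /\ valid_trace adj P (rcons cur i) h)); first exact: IH.
  by apply/funext => h; rewrite /= i_new lt_cur_i iP.
- have x_done := next_event_None nx.
  case: ifPn => [_ | cur_ne]; first by apply: le_if_asbool.
  have cur_nil : ~~ nilp cur.
    by apply: contra cur_ne; move/nilP ->; apply/eqP/setP => z; rewrite !inE.
  have -> : finset.set0 = [set z in [::] : seq 'I_n] by apply/setP => z; rewrite !inE.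
  rewrite -[rcons [::] _]/([:: EndIt] ++ [::]) !run_val_cat.
  rewrite (_ : (fun h => _ /\ _) =
      (fun h => Q ([:: EndIt] ++ h) /\ valid_trace adj [set z in cur] [::] h)).
    by apply: IH => j _ /= /x_done.
  by apply/funext => h; rewrite /= cur_nil.
Qed.

Fixpoint word_weight w x : \bar R :=
  match w with
  | [::] => 1
  | Res i :: w' => (\1_(E i) x)%:E * \int[r i x]_y word_weight w' y
  | EndIt :: w' => word_weight w' x
  | Halt :: _ => 1
  end.

Fixpoint word_prob w : R :=
  match w with
  | [::] => 1
  | Res i :: w' => fine (mu (E i)) * word_prob w'
  | EndIt :: w' => word_prob w'
  | Halt :: _ => 1
  end.

Lemma word_weight_ge0 w x : 0 <= word_weight w x.
Proof.
elim: w x => [|[i| |] w IH] x //=.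
by rewrite mule_ge0 ?lee_fin // integral_ge0.
Qed.

Lemma measurable_word_weight w : measurable_fun setT (word_weight w).
Proof.
elim: w => [|[i| |] w IH] //=; try exact: measurable_cst.
apply: emeasurable_funM; first by apply/measurable_EFinP; exact: measurable_indic.
apply: (measurable_fun_integral_kernel (l := r i)); first exact: measurable_kernel.
  by move=> y; exact: word_weight_ge0.
exact: IH.
Qed.

Hypothesis R1 : forall i, oracle_R1 E mu r i.
Hypothesis E_gt0 : forall i, 0 < mu (E i).

Lemma integral_word_weight w : \int[mu]_x word_weight w x = (word_prob w)%:E.
Proof.
have int1 : \int[mu]_x (cst 1 x) = 1 by rewrite integral_cst // mul1e; exact: probability_setT.
elim: w => [|[i| |] w IH] //=.
rewrite EFinM -IH -(integral_resampling (mE i) (R1 i) (E_gt0 i) (@word_weight_ge0 w)) //.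
  rewrite [RHS]integral_mkcond; apply: eq_integral => x _.
  by rewrite /patch indicE; case: (x \in E i); rewrite ?mul1e ?mul0e.
exact: measurable_word_weight.
Qed.

Lemma run_val_le_sum (W : eqType) (ws : seq W) (F : W -> seq (step n) -> Prop) Q k x J h :
  (forall h', Q h' -> exists2 w, w \in ws & F w h') ->
  run_val Q k x J h <= \sum_(w <- ws) run_val (F w) k x J h.
Proof.
move=> QF.
have sat k' x' J' h' : (exists2 w, w \in ws & F w h') ->
    run_val Q k' x' J' h' <= \sum_(w <- ws) run_val (F w) k' x' J' h'.
  case=> w w_ws Fwh; apply: le_trans (run_val_le1 _ _ _ _ _) _.
  rewrite -(run_val_sat k' x' J' Fwh); apply: lee_sum_seq_nneg w_ws => u.
  exact: run_val_ge0.
elim: k x J h => [|k IH] x J h; have [/sat // | noF] := pselect (exists2 w, w \in ws & F w h).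
  by rewrite [X in X <= _]/= asboolF; [apply: sume_ge0 => w _; exact: run_val_ge0 | move/QF].
rewrite run_val_unfold; last by move/QF.
under eq_big_seq => w w_ws.
  rewrite run_val_unfold; last by move=> Fwh; apply: noF; exists w.
  over.
case: next_event => [i|].
  apply: le_trans (_ : _ <= \int[r i x]_y \sum_(w <- ws) run_val (F w) k y (i |: J)
                                          (rcons h (Res i))) _.
    apply: ge0_le_integral => //; first by move=> *; exact: run_val_ge0.
    - exact: measurable_run_val.
    - by apply: emeasurable_sum => w; exact: measurable_run_val.
  rewrite ge0_integral_sum // => [w|w y _]; [exact: measurable_run_val | exact: run_val_ge0].
case: ifP => _; last exact: IH.
case: (asboolP (Q (rcons h Halt))) => [/QF [w w_ws Fw] | _].
  apply: le_trans (lee_sum_seq_nneg _ w_ws) => [|u]; first by rewrite asboolT.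
  by case: asboolP.
by apply: sume_ge0 => w _; case: asboolP.
Qed.

Lemma run_val_prefix_le w k x J :
  run_val (fun h => prefix w h) k x J [::] <= word_weight w x.
Proof.
elim: k w x J => [|k IH] [|a w] x J; try exact: run_val_le1.
  by rewrite [X in X <= _]/= asboolF //; exact: word_weight_ge0.
rewrite run_val_unfold //; case nx: next_event => [i|].
  rewrite -[rcons [::] _]/([:: Res i] ++ [::]).
  under eq_integral do rewrite run_val_cat.
  have [-> | a_ne] := eqVneq a (Res i); last first.
    rewrite integral0_eq ?word_weight_ge0 // => y _.
    by apply: run_val_pred0 => h /=; rewrite (negbTE a_ne).
  have [_ Ei _] := next_event_Some nx; rewrite /= indicE mem_set // mul1e.
  apply: ge0_le_integral => //; first by move=> *; exact: run_val_ge0.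
  - exact: measurable_run_val.
  - exact: measurable_word_weight.
  - by move=> y _; rewrite eqxx; exact: IH.
case: ifP => _.
  case: asboolP => [|_]; last exact: word_weight_ge0.
  by rewrite /= => /andP [/eqP ->].
rewrite -[rcons [::] _]/([:: EndIt] ++ [::]) run_val_cat.
have [-> | a_ne] := eqVneq a EndIt; first exact: IH.
by rewrite run_val_pred0 ?word_weight_ge0 // => h /=; rewrite (negbTE a_ne).
Qed.

Lemma alg_prob_le_sum Q (ws : seq (seq (step n))) :
  (forall h, Q h -> valid_trace adj [set: 'I_n] [::] h -> exists2 w, w \in ws & prefix w h) ->
  alg_prob adj E mu r Q <= (\sum_(w <- ws) word_prob w)%:E.
Proof.
move=> Q_ws; apply: ge_ereal_sup => _ [k _ <-].
rewrite -sumEFin -(eq_bigr _ (fun w _ => integral_word_weight w)) -ge0_integral_sum //;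
  [| exact: measurable_word_weight | by move=> w y _; exact: word_weight_ge0].
apply: ge0_le_integral => //; first by move=> *; exact: run_val_ge0.
- exact: measurable_run_val.
- by apply: emeasurable_sum => w; exact: measurable_word_weight.
move=> x _; have -> : finset.set0 = [set z in [::] : seq 'I_n] by apply/setP => z; rewrite !inE.
apply: le_trans (@run_val_le_valid Q k x [set: 'I_n] [::] _) _.
  by move=> j _; rewrite closedNT inE.
apply: le_trans (run_val_le_sum (F := fun w h => prefix w h) _ _ _ _ _) _.
  by move=> h [Qh h_valid]; exact: Q_ws.
by apply: lee_sum => w _; exact: run_val_prefix_le.
Qed.

Lemma word_prob_blocks_word bs :
  word_prob (blocks_word bs) = (\prod_(b <- bs) \prod_(i <- b) fine (mu (E i)))%R.
Proof.
have word_prob_cat b w :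
    word_prob (map (@Res n) b ++ w) = (\prod_(i <- b) fine (mu (E i)) * word_prob w)%R.
  by elim: b => [|i b IH] /=; rewrite ?big_nil ?mul1r // IH big_cons mulrA.
elim: bs => [|b [|b' bs] IH]; rewrite ?big_nil //.
  by rewrite /= word_prob_cat big_seq1 mulr1.
rewrite (_ : blocks_word _ = map (@Res n) b ++ EndIt :: blocks_word (b' :: bs)) //.
rewrite word_prob_cat.
have -> : word_prob (EndIt :: blocks_word (b' :: bs)) = word_prob (blocks_word (b' :: bs)) by [].
by rewrite IH !big_cons.
Qed.

Lemma word_prob_stable_word I : word_prob (stable_word I) = pI E mu I.
Proof.
rewrite /stable_word word_prob_blocks_word big_map; apply: eq_bigr => J _.
by rewrite big_enum.
Qed.

Lemma alg_prob_le_sum_pI Q (Is : seq (seq {set 'I_n})) :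
  (forall h, Q h -> valid_trace adj [set: 'I_n] [::] h ->
     exists2 I, I \in Is & prefix (stable_word I) h) ->
  alg_prob adj E mu r Q <= (\sum_(I <- Is) pI E mu I)%:E.
Proof.
move=> Q_Is; apply: le_trans; first apply: (alg_prob_le_sum (ws := [seq stable_word K | K <- Is])).
  move=> h Qh h_valid; have [I I_Is I_prefix] := Q_Is h Qh h_valid.
  by exists (stable_word I); rewrite ?map_f.
by rewrite big_map; under eq_bigr do rewrite word_prob_stable_word.
Qed.

End RunVal.

Lemma sum_enum_tuples (V : nmodType) (X : finType) l (P : pred (l.-tuple X)) (F : seq X -> V) :
  (\sum_(s <- [seq val t | t <- enum P]) F s = \sum_(t | P t) F t)%R.
Proof. by rewrite big_map big_enum_cond; apply: eq_bigl => t; rewrite andbT. Qed.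

Theorem mainTheorem6 (d : measure_display) (T : measurableType d) (R : realType)
  (mu : probability T R) (n : nat) (E : 'I_n -> set T) (adj : rel 'I_n)
  (r : 'I_n -> R.-pker T ~> T) :
  simple_graph adj ->
  (forall i, measurable (E i)) ->
  (forall i, (0 < mu (E i))%E) ->
  (forall i, oracle_R1 E mu r i) ->
  (forall i, oracle_R2 adj E r i) ->
  (forall I : seq {set 'I_n}, proper_stable_seq adj I ->
     (alg_prob adj E mu r (follows_trace I) <= (pI E mu I)%:E)%E) /\
  (forall l : nat, (1 <= l)%N ->
     (alg_prob adj E mu r (atleast_iter_trace l) <=
      (\sum_(I : l.-tuple {set 'I_n} | proper_stable_seq adj I) pI E mu I)%:E)%E) /\
  (forall s : nat, (1 <= s)%N ->
     (alg_prob adj E mu r (atleast_res_trace s) <=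
      (\sum_(0 <= l < s.+1)
         \sum_(I : l.-tuple {set 'I_n} |
                 proper_stable_seq adj I && (sigma_seq I == s)) pI E mu I)%:E)%E).
Proof.
move=> adj_simple mE E_gt0 R1 R2; have bound := alg_prob_le_sum_pI mE R2 R1 E_gt0.
split; [|split].
- move=> I _; apply: le_trans (bound _ [:: I] _) _; last by rewrite big_seq1.
  move=> h h_follows h_valid; exists I; rewrite ?mem_seq1 //.
  exact: (follows_trace_prefix adj_simple h_valid h_follows).
- move=> l l_gt0; rewrite -sum_enum_tuples; apply: bound => h h_iter h_valid.
  have [I I_proper I_prefix] := iterations_prefix adj_simple h_valid l_gt0 h_iter.
  by exists (val I) => //; apply: map_f; rewrite mem_enum.
- move=> s s_gt0.
  rewrite (_ : (\sum_(0 <= l < s.+1) _ = \sum_(I <- flatten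
      [seq [seq val t | t <- enum (fun t : l.-tuple {set 'I_n} =>
           proper_stable_seq adj t && (sigma_seq t == s))] | l <- index_iota 0 s.+1])
      pI E mu I)%R); last first.
    by rewrite big_flatten big_map; apply: eq_bigr => l _; rewrite sum_enum_tuples.
  apply: bound => h h_res h_valid.
  have [I [I_proper I_size I_sigma I_prefix]] := resamplings_prefix adj_simple h_valid s_gt0 h_res.
  exists I => //; apply/flatten_mapP; exists (size I); first by rewrite mem_index_iota ltnS.
  apply/mapP; exists (Tuple (eqxx (size I))) => //.
  by rewrite mem_enum; apply/andP; split; [exact: I_proper | exact/eqP].
Qed.
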